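(* Let $\pi\in S_n$ be a 321-avoiding permutation which is not the identity, and let $i_1<i_2<\dots<i_r$ be its excedance locations (the indices $i$ with $\pi(i)>i$). Then the connectivity set of $\pi$ has cardinality $$i_1+\sum_{j=2}^{r}\max\{i_j-\pi(i_{j-1}),0\}+n-\pi(i_r).$$
   Context: A permutation $\pi$ of $[n]$ is 321-avoiding if there are no $i<j<k$ with $\pi(k)<\pi(j)<\pi(i)$. The connectivity set of $\sigma\in S_n$ is the set of indices $1\le i\le n$ such that $\sigma(k)<i$ for all $k<i$. *)

(* Permutations of [n] = {1,...,n} are modelled by 'S_n
   (permutations of 'I_n = {0,...,n-1}); [pv s i] reads s as a map on
   {1,...,n} (1-indexed), i.e. pv s i = s(i-1)+1 for 1 <= i <= n. *)
From mathcomp Require Import all_boot all_order all_algebra all_fingroup.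
Set Implicit Arguments. Unset Strict Implicit. Unset Printing Implicit Defensive.

Definition pv (n : nat) (s : 'S_n) (i : nat) : nat :=
  match (insub i.-1 : option 'I_n) with
  | Some j => (s j).+1
  | None => 0
  end.

Definition avoids321 (n : nat) (s : 'S_n) : bool :=
  ~~ [exists i : 'I_n, exists j : 'I_n, exists k : 'I_n,
        [&& i < j, j < k, s k < s j & s j < s i]].

Definition connectivity_set (n : nat) (s : 'S_n) : seq nat :=
  [seq i <- iota 1 n | all (fun k => pv s k < i) (iota 1 i.-1)].

Definition excedances (n : nat) (s : 'S_n) : seq nat :=
  [seq i <- iota 1 n | i < pv s i].

(* An index x is missing from the connectivity set of pi exactly when it lies
   in an interval (k, pi(k)] for some excedance k.  If pi avoids 321, the
   excedance values increase along the excedance locations: a value larger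
   than pi(j) to the left of an excedance j, together with a position after j
   mapped at most to j (which exists since pi is a bijection), would form a
   321 pattern.  Hence the intervals (i_j, pi(i_j)] have nondecreasing left and
   right ends, and the indices they leave uncovered are the gaps [1, i_1],
   (pi(i_(j-1)), i_j] and (pi(i_r), n]. *)

From mathcomp Require Import all_boot all_order all_algebra all_fingroup.
From mathcomp Require Import zify.
Import Order.TTheory GRing.Theory Num.Theory.

Set Implicit Arguments.
Unset Strict Implicit.

Definition covered (f : nat -> nat) (E : seq nat) (x : nat) : bool :=
  has (fun i => i < x <= f i) E.

(* Total length of the gaps (L, a_1], (f a_1, a_2], ..., (f a_k, n] left by the
   intervals (a_i, f a_i]; truncated subtraction makes overlapping ones count 0. *)
Fixpoint gap_length (f : nat -> nat) (n L : nat) (E : seq nat) : nat :=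
  if E is a :: E' then (a - L) + gap_length f n (f a) E' else n - L.

Lemma iota_cat_at m k p : m <= k <= p ->
  iota m.+1 (p - m) = iota m.+1 (k - m) ++ iota k.+1 (p - k).
Proof.
move=> /andP[le_mk le_kp]; have -> : p - m = (k - m) + (p - k) by lia.
by rewrite iotaD; congr (_ ++ iota _ _); lia.
Qed.

Lemma count_uncovered f n L E :
    L <= n -> all (fun i => i <= f i <= n) E ->
    pairwise (fun i j => (i <= j) && (f i <= f j)) E ->
    all (fun i => L <= f i) E ->
  count (predC (covered f E)) (iota L.+1 (n - L)) = gap_length f n L E.
Proof.
elim: E L => [|a E IH] L le_Ln /=.
  by move=> _ _ _; rewrite (eq_count (a2 := predT)) ?count_predT ?size_iota.
move=> /andP[/andP[le_afa le_fan] fE] /andP[/allP a_le_E pwE] /andP[le_Lfa _].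
set m := maxn L a.
have low : {in iota L.+1 (m - L), predC (covered f (a :: E)) =1 predT}.
  move=> x; rewrite mem_iota => x_range /=; rewrite negb_or; apply/andP.
  by split; [lia | apply/hasPn => i /a_le_E/andP[le_ai _]; lia].
have mid : {in iota m.+1 (f a - m), predC (covered f (a :: E)) =1 pred0}.
  by move=> x; rewrite mem_iota => x_range /=; apply/negbF/orP; left; lia.
have high : {in iota (f a).+1 (n - f a),
              predC (covered f (a :: E)) =1 predC (covered f E)}.
  by move=> x; rewrite mem_iota => x_range /=; have -> : (a < x <= f a) = false by lia.
rewrite (@iota_cat_at L m n); last by lia.
rewrite (@iota_cat_at m (f a) n); last by lia.
rewrite !count_cat (eq_in_count low) (eq_in_count mid) (eq_in_count high).
rewrite count_predT count_pred0 size_iota IH //; first by lia.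
by apply/allP => i /a_le_E /andP[].
Qed.

Lemma gap_length_cons f n L a E :
  gap_length f n L (a :: E) =
    (a - L) + \sum_(1 <= j < size (a :: E))
                (nth 0 (a :: E) j - f (nth 0 (a :: E) j.-1))
    + (n - f (last a E)).
Proof.
elim: E a L => [|b E IH] a L; first by rewrite /= big_geq ?addn0.
rewrite [LHS]/= -/(gap_length f n (f a) (b :: E)) IH.
rewrite (big_nat_recl (size E).+1) // !addnA; congr (_ + _ + _).
by apply: eq_big_nat => -[|j].
Qed.

Section Permutations.
Variable n : nat.
Implicit Types (s : 'S_n) (I J K : 'I_n).

Lemma excedance_compensated s J : J < s J -> exists2 K : 'I_n, J < K & s K <= J.
Proof.
move=> lt_J_sJ; apply/exists_inP; apply: contraLR lt_J_sJ => /exists_inPn above.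
set U := [set K : 'I_n | J < K].
have sU_sub : s @: U \subset U.
  apply/subsetP => _ /imsetP[K K_U ->]; move: K_U; rewrite !inE => /above.
  by rewrite -ltnNge.
have sU : s @: U = U by apply/eqP; rewrite eqEcard sU_sub card_imset ?leqnn //; exact: perm_inj.
apply/negP => lt_J_sJ.
have : s J \in s @: U by rewrite sU inE.
by case/imsetP => K; rewrite inE => lt_JK /perm_inj eq_JK; rewrite eq_JK ltnn in lt_JK.
Qed.

Lemma perm_no_excedance_eq1 s : (forall I, s I <= I) -> s = 1%g.
Proof.
move=> s_le; apply/permP => I; rewrite perm1; apply/val_inj/eqP.
have sum_eq : \sum_(K : 'I_n) (s K : nat) = \sum_(K : 'I_n) (K : nat).
  by rewrite [RHS](reindex_inj (@perm_inj _ s)).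
have := leqif_sum (fun K (_ : true) => leqif_eq (s_le K)).
by rewrite sum_eq => /leqif_refl/forallP/(_ I).
Qed.

Lemma avoids321_lt_excedance s I J :
  avoids321 s -> J < s J -> I < J -> s I < s J.
Proof.
move=> avoid lt_J_sJ lt_IJ; rewrite ltnNge; apply/negP => le_sI_sJ.
have [K lt_JK le_sK_J] := excedance_compensated lt_J_sJ.
have ne_sJ_sI : s J != s I :> nat.
  by apply/eqP => /val_inj/perm_inj eq_JI; rewrite eq_JI ltnn in lt_IJ.
move/negP: avoid; apply; apply/existsP; exists I; apply/existsP; exists J.
apply/existsP; exists K; apply/and4P; split => //.
  exact: leq_ltn_trans le_sK_J lt_J_sJ.
by rewrite ltn_neqAle ne_sJ_sI.
Qed.

Lemma pvE s I : pv s I.+1 = (s I).+1.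
Proof. by rewrite /pv /= valK. Qed.

Lemma pv_le s i : pv s i <= n.
Proof. by rewrite /pv; case: insubP => // I _ _; exact: ltn_ord. Qed.

Lemma exists_ordS i : 0 < i <= n -> exists I, i = I.+1.
Proof.
by case: i => // i; rewrite ltnS => lt_in; exists (Ordinal lt_in).
Qed.

(* [pv s 0] equals [pv s 1] rather than 0, hence the [0 < i] conjunct. *)
Lemma mem_excedances s i : (i \in excedances s) = (0 < i) && (i < pv s i).
Proof. by rewrite mem_filter mem_iota andbC; have := pv_le s i; lia. Qed.

Lemma excedances_sorted s : avoids321 s ->
  pairwise (fun i j => (i <= j) && (pv s i <= pv s j)) (excedances s).
Proof.
move=> avoid; have : pairwise ltn (excedances s).
  rewrite -sorted_pairwise; last exact: ltn_trans.
  by apply: sorted_filter; [exact: ltn_trans | exact: iota_ltn_sorted].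
apply: sub_in_pairwise (allss _) => i j.
rewrite !mem_excedances => /andP[i_gt0 lt_i_pvi] /andP[j_gt0 lt_j_pvj] lt_ij.
have [I def_i] : exists I, i = I.+1 by apply: exists_ordS; have := pv_le s i; lia.
have [J def_j] : exists J, j = J.+1 by apply: exists_ordS; have := pv_le s j; lia.
subst i j; move: lt_j_pvj lt_ij => /=; rewrite pvE !ltnS => lt_J_sJ lt_IJ.
by rewrite pvE !ltnS (ltnW lt_IJ) (ltnW (avoids321_lt_excedance avoid lt_J_sJ lt_IJ)).
Qed.

Lemma excedances_eq_nil s : excedances s = [::] -> s = 1%g.
Proof.
move=> no_exc; apply: perm_no_excedance_eq1 => I; rewrite leqNgt -ltnS -pvE.
by have := mem_excedances s I.+1; rewrite no_exc in_nil /= => <-.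
Qed.

Lemma size_connectivity_set s :
  size (connectivity_set s) = count (predC (covered (pv s) (excedances s))) (iota 1 n).
Proof.
rewrite size_filter; apply: eq_count => x /=; apply/allP/hasPn => [below i | uncov k].
  rewrite mem_excedances => /andP[i_gt0 _]; apply/negP => /andP[lt_ix le_x_pvi].
  by have := below i; rewrite mem_iota; lia.
rewrite mem_iota => k_range; rewrite ltnNge; apply/negP => le_x_pvk.
by have := uncov k; rewrite mem_excedances; lia.
Qed.

Lemma size_connectivity_set_avoids321 s : avoids321 s ->
  size (connectivity_set s) = gap_length (pv s) n 0 (excedances s).
Proof.
move=> avoid; rewrite size_connectivity_set -[n in iota _ n]subn0 count_uncovered //.
- apply/allP => i; rewrite mem_excedances pv_le => /andP[_ /ltnW ->] //.
- exact: excedances_sorted.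
- exact/allP.
Qed.

End Permutations.

Local Open Scope ring_scope.

Lemma max_subz0 (x y : nat) : Num.max (x%:Z - y%:Z) 0 = (x - y)%N.
Proof.
have [le_yx | lt_xy] := leqP y x.
  by rewrite max_l ?subzn // subr_ge0 lez_nat.
rewrite max_r; last by rewrite subr_le0 lez_nat ltnW.
by have /eqP -> : (x - y == 0)%N by rewrite subn_eq0 ltnW.
Qed.

Theorem mainTheorem13 (n : nat) (s : 'S_n) :
  avoids321 s -> s != 1%g ->
  let e := excedances s in
  let r := size e in
  (size (connectivity_set s))%:Z =
    (nth 0%N e 0)%:Z
    + \sum_(1 <= j < r) Num.max ((nth 0%N e j)%:Z - (pv s (nth 0%N e j.-1))%:Z) 0
    + n%:Z - (pv s (nth 0%N e r.-1))%:Z.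
Proof.
move=> avoid s_neq1 /=; rewrite size_connectivity_set_avoids321 //.
case def_e: (excedances s) => [|a E].
  by rewrite (excedances_eq_nil def_e) eqxx in s_neq1.
rewrite gap_length_cons subn0 nth_last /=.
rewrite (eq_bigr _ (fun j _ => max_subz0 _ _)).
rewrite -(big_morph _ PoszD (erefl 0%N%:Z)).
have := pv_le s (last a E); lia.
Qed.
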